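(* $Lex_{AB}$ is not universal: there is an epistemic space $\mathbb{S}$ that is identifiable in the limit but is not identifiable in the limit by $Lex_{AB}$.
   Context: An epistemic space is a pair $\mathbb{S}=(S,\mathcal{O})$ where $S$ is a non-empty, at most countable set of worlds and $\mathcal{O}\subseteq\mathcal{P}(S)$ is a set of observables. A data stream is an infinite sequence $\vec O=(O_0,O_1,\ldots)$ of elements of $\mathcal{O}$; $\vec O[n]=(O_0,\ldots,O_{n-1})$; it is sound for $s$ if $s\in O_n$ for all $n$ and complete for $s$ if every $O\in\mathcal{O}$ with $s\in O$ occurs in it. $\mathbb{S}$ is identifiable in the limit if some learner (map from finite sequences to subsets of $S$) outputs $\{s\}$ on all sufficiently long initial segments of every stream sound and complete for $s$, for every $s\in S$. A plausibility space is $\mathbb{B}=(S,\mathcal{O},\preceq)$, $\preceq$ a total preorder on $S$; $\min_\preceq X$ is the set of $\preceq$-minimal elements of $X$. Lexicographic revision: for $p\subseteq S$, $\bar p=S\setminus p$, $Lex_1(\mathbb{B},p)=(S,\mathcal{O},\preceq')$ with $t\preceq' w$ iff ($t,w\in p$ and $t\preceq w$) or ($t,w\in\bar p$ and $t\preceq w$) or ($t\in p$, $w\notin p$). Upgrade: for a preorder $\preceq$ on $S$ and $x\in S$, ${\preceq}\uparrow x=({\preceq}\cap((S\setminus\{x\})\times(S\setminus\{x\})))\cup\{(x,s)\mid s\in S\setminus\{x\}\}$. Anchored lexicographic revision: if $Lex_1(\mathbb{B},p)=(S,\mathcal{O},\preceq')$, then $Lex^+_1(\mathbb{B},p)=(S,\mathcal{O},\preceq')$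 if $|\min_{\preceq'}S|=1$, and otherwise $Lex^+_1(\mathbb{B},p)=(S,\mathcal{O},{\preceq'}\uparrow x)$ for some (randomly chosen) $x\in\min_{\preceq'}S$. The anchoring-biased method: $Lex_{AB}(\mathbb{B},\lambda)=\mathbb{B}$ and $Lex_{AB}(\mathbb{B},\sigma\cdot p)=Lex^+_1(Lex_{AB}(\mathbb{B},\sigma),\min_{\preceq_{AB}}(S\cap p))$, where $Lex_{AB}(\mathbb{B},\sigma)=(S,\mathcal{O},\preceq_{AB})$. Its conjecture on $\sigma$ is the set of minimal worlds of $Lex_{AB}((S,\mathcal{O},\preceq),\sigma)$. $\mathbb{S}$ is identifiable in the limit by $Lex_{AB}$ if there is a total preorder $\preceq$ on $S$ such that for every $s\in S$, every stream sound and complete for $s$, and every resolution of the random choices, the conjecture on $\vec O[n]$ is $\{s\}$ for all sufficiently large $n$. *)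

From Stdlib Require Import List.

Section Defs.
Variable W : Type.  (* the set S of worlds is the whole carrier type W *)

Definition pset := W -> Prop.
Definition prel := W -> W -> Prop.

Definition at_most_countable : Prop :=
  exists f : W -> nat, forall x y, f x = f y -> x = y.

Definition data_stream (Obs : pset -> Prop) (D : nat -> pset) : Prop :=
  forall n, Obs (D n).
Definition sound_for (D : nat -> pset) (s : W) : Prop := forall n, D n s.
Definition complete_for (Obs : pset -> Prop) (D : nat -> pset) (s : W) : Prop :=
  forall O, Obs O -> O s -> exists n, D n = O.

(* initial segment  D[n] = (D 0, ..., D (n-1)) *)
Definition prefix (D : nat -> pset) (n : nat) : list pset := map D (seq 0 n).

Definition is_singleton_of (X : pset) (s : W) : Prop := forall w, X w <-> w = s.
Definition is_singleton (X : pset) : Prop := exists s, is_singleton_of X s.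

Definition identifiable (Obs : pset -> Prop) : Prop :=
  exists L : list pset -> pset,
    forall s D, data_stream Obs D -> sound_for D s -> complete_for Obs D s ->
      exists N, forall n, N <= n -> is_singleton_of (L (prefix D n)) s.

Definition total_preorder (le : prel) : Prop :=
  (forall x y, le x y \/ le y x) /\ (forall x y z, le x y -> le y z -> le x z).

Definition minset (le : prel) (X : pset) : pset :=
  fun x => X x /\ forall y, X y -> le y x -> le x y.

Definition setT : pset := fun _ => True.

Definition lex1 (le : prel) (p : pset) : prel :=
  fun t w => (p t /\ p w /\ le t w) \/ (~ p t /\ ~ p w /\ le t w) \/ (p t /\ ~ p w).

(* upgrade  le ↑ x  (taken literally from the paper) *)
Definition upgrade (le : prel) (x : W) : prel :=
  fun t w => (t <> x /\ w <> x /\ le t w) \/ (t = x /\ w <> x).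

Definition rel_eq (r1 r2 : prel) : Prop := forall t w, r1 t w <-> r2 t w.

(* anchored lexicographic revision Lex^+_1, as a (nondeterministic) relation:
   lexplus le p le2  iff  le2 is a possible result of Lex^+_1(le, p) *)
Definition lexplus (le : prel) (p : pset) (le2 : prel) : Prop :=
  (is_singleton (minset (lex1 le p) setT) /\ rel_eq le2 (lex1 le p)) \/
  (~ is_singleton (minset (lex1 le p) setT) /\
   exists x, minset (lex1 le p) setT x /\ rel_eq le2 (upgrade (lex1 le p) x)).

Definition ab_step (le : prel) (p : pset) (le2 : prel) : Prop :=
  lexplus le (minset le p) le2.

(* P 0, ..., P n is a run of Lex_AB (one resolution of the random choices)
   from the prior le0 on the stream D *)
Definition ab_partial_run (le0 : prel) (D : nat -> pset) (P : nat -> prel) (n : nat)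
  : Prop :=
  rel_eq (P 0) le0 /\ forall k, k < n -> ab_step (P k) (D k) (P (S k)).

Definition ab_run (le0 : prel) (D : nat -> pset) (P : nat -> prel) : Prop :=
  rel_eq (P 0) le0 /\ forall k, ab_step (P k) (D k) (P (S k)).

(* identifiability in the limit by Lex_AB: the method is defined along every
   resolution of the random choices, and on every resolution the conjecture
   (minimal worlds of the current order) is eventually {s} *)
Definition identifiable_LexAB (Obs : pset -> Prop) : Prop :=
  exists le0 : prel, total_preorder le0 /\
    forall s D, data_stream Obs D -> sound_for D s -> complete_for Obs D s ->
      (forall n P, ab_partial_run le0 D P n -> exists le2, ab_step (P n) (D n) le2) /\
      (forall P, ab_run le0 D P ->
         exists N, forall n, N <= n -> is_singleton_of (minset (P n) setT) s).

End Defs.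

(* Take worlds a, b, c observed through {a,b} and {a,c}; a learner names the
   world from which of these two observables have appeared so far. If the prior has a ≤ b, then along the constant stream
   {a,b} (sound and complete for b) some run keeps a strictly more plausible
   than b forever: a strict preference for a is renewed by every revision, and
   a tie can be broken by anchoring a. So a successful prior makes b, and
   likewise c, strictly more plausible than a. But then, on the alternating
   stream {a,b}, {a,c}, ... for a, each revision moves b or c to the top and
   leaves the other one strictly more plausible than a, so a is never a
   minimal world. *)
From Stdlib Require Import List Lia Classical.

#[local] Arguments minset {W}.
#[local] Arguments setT {W}.
#[local] Arguments lex1 {W}.
#[local] Arguments upgrade {W}.
#[local] Arguments ab_step {W}.
#[local] Arguments ab_run {W}.
#[local] Arguments prefix {W}.
#[local] Arguments sound_for {W}.
#[local] Arguments complete_for {W}.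
#[local] Arguments is_singleton_of {W}.

Section LexAB.
Variable W : Type.
Implicit Types (R : prel W) (p q : pset W) (D : nat -> pset W).

Definition strictly_below R (x y : W) : Prop := R x y /\ ~ R y x.

Definition doubleton (x y : W) : pset W := fun w => w = x \/ w = y.

Lemma strictly_below_not_minimal R x y : strictly_below R x y -> ~ minset R setT y.
Proof. intros [Rxy nRyx] [_ Hmin]. exact (nRyx (Hmin x I Rxy)). Qed.

Lemma minset_strict_min R p x :
  p x -> (forall z, p z -> z = x \/ strictly_below R x z) ->
  is_singleton_of (minset R p) x.
Proof.
  intros px Hx w; split.
  - intros [pw Hw]. destruct (Hx w pw) as [-> | [Rxw nRwx]]; [reflexivity |].
    exfalso. exact (nRwx (Hw x px Rxw)).
  - intros ->. split; [exact px |].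
    intros z pz Rzx. destruct (Hx z pz) as [-> | [_ nRzx]]; [exact Rzx | contradiction].
Qed.

Lemma minset_doubleton_l R a y :
  strictly_below R a y -> is_singleton_of (minset R (doubleton a y)) a.
Proof.
  intros Hay. apply minset_strict_min; [now left |].
  intros z [-> | ->]; [now left | now right].
Qed.

Lemma minset_doubleton_r R a b :
  strictly_below R b a -> is_singleton_of (minset R (doubleton a b)) b.
Proof.
  intros Hba. apply minset_strict_min; [now right |].
  intros z [-> | ->]; [now right | now left].
Qed.

Lemma minset_doubleton_tie R a y :
  R a y -> R y a -> minset R (doubleton a y) a /\ minset R (doubleton a y) y.
Proof.
  intros Hay Hya. split; split; try (now left); try (now right);
    intros z [-> | ->] Hz; assumption.
Qed.

Lemma minset_idem R p x : minset R (minset R p) x <-> minset R p x.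
Proof. unfold minset. firstorder. Qed.

Lemma lex1_strictly_below_in_out R q t w : q t -> ~ q w -> strictly_below (lex1 R q) t w.
Proof. unfold strictly_below, lex1. tauto. Qed.

Lemma lex1_strictly_below_out R q t w :
  ~ q t -> ~ q w -> strictly_below R t w -> strictly_below (lex1 R q) t w.
Proof. unfold strictly_below, lex1. tauto. Qed.

Lemma minset_lex1 R q x : (exists z, q z) -> minset (lex1 R q) setT x <-> minset R q x.
Proof.
  intros [z qz]. unfold minset, lex1, setT. split.
  - intros [_ Hx]. destruct (classic (q x)) as [qx | nqx].
    + split; [exact qx |]. intros y qy Ryx. specialize (Hx y I). tauto.
    + exfalso. specialize (Hx z I). tauto.
  - intros [qx Hx]. split; [exact I |]. intros y _ Hyx. specialize (Hx y). tauto.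
Qed.

Lemma minset_lex1_minset R p x :
  (exists z, minset R p z) -> minset (lex1 R (minset R p)) setT x <-> minset R p x.
Proof. intros Hne. rewrite (minset_lex1 _ _ _ Hne). apply minset_idem. Qed.

Lemma ab_step_singleton R p y :
  is_singleton_of (minset R p) y -> ab_step R p (lex1 R (minset R p)).
Proof.
  intros Hy. left. split.
  - exists y. intro w. rewrite minset_lex1_minset by (exists y; apply Hy; reflexivity).
    apply Hy.
  - intros t w. reflexivity.
Qed.

Lemma ab_step_upgrade R p x y :
  minset R p x -> minset R p y -> x <> y -> ab_step R p (upgrade (lex1 R (minset R p)) x).
Proof.
  intros mx my nxy.
  assert (Hmin : forall w, minset (lex1 R (minset R p)) setT w <-> minset R p w)
    by (intro w; apply minset_lex1_minset; now exists x).
  right. split.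
  - intros [s Hs]. apply nxy.
    transitivity s; [| symmetry]; apply Hs, Hmin; assumption.
  - exists x. split; [now apply Hmin | intros t w; reflexivity].
Qed.

Lemma upgrade_strictly_below R x w : w <> x -> strictly_below (upgrade R x) x w.
Proof. unfold strictly_below, upgrade. intuition. Qed.

Fixpoint lex_run (le0 : prel W) D (k : nat) : prel W :=
  match k with
  | 0 => le0
  | S k => let R := lex_run le0 D k in lex1 R (minset R (D k))
  end.

Lemma lex_run_invariant (Inv : prel W -> Prop) (le0 : prel W) D :
  Inv le0 ->
  (forall R k, Inv R ->
     exists y, is_singleton_of (minset R (D k)) y /\ Inv (lex1 R (minset R (D k)))) ->
  ab_run le0 D (lex_run le0 D) /\ forall k, Inv (lex_run le0 D k).
Proof.
  intros H0 Hstep.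
  assert (Hinv : forall k, Inv (lex_run le0 D k)).
  { induction k as [| k IH]; [exact H0 |].
    destruct (Hstep _ k IH) as [y [_ Hy]]. exact Hy. }
  split; [split | exact Hinv].
  - intros t w. reflexivity.
  - intro k. destruct (Hstep _ k (Hinv k)) as [y [Hy _]]. exact (ab_step_singleton _ _ y Hy).
Qed.

Lemma ab_run_cons (le0 : prel W) D (P : nat -> prel W) :
  ab_step le0 (D 0) (P 0) -> (forall k, ab_step (P k) (D (S k)) (P (S k))) ->
  ab_run le0 D (fun k => match k with 0 => le0 | S k => P k end).
Proof.
  intros H0 HS. split; [intros t w; reflexivity |].
  intros [| k]; [exact H0 | exact (HS k)].
Qed.

Lemma lexab_doubleton_run_stuck (le0 : prel W) a y :
  a <> y -> le0 a y ->
  exists P, ab_run le0 (fun _ => doubleton a y) P /\ forall k, strictly_below (P (S k)) a y.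
Proof.
  intros nay Hay. set (D := fun _ : nat => doubleton a y).
  assert (Hstep : forall R k, strictly_below R a y ->
    exists x, is_singleton_of (minset R (D k)) x
              /\ strictly_below (lex1 R (minset R (D k))) a y).
  { intros R k Hb. pose proof (minset_doubleton_l R a y Hb) as Hq.
    exists a. split; [exact Hq |]. apply lex1_strictly_below_in_out.
    - now apply Hq.
    - intros qy. apply nay. symmetry. now apply Hq. }
  destruct (classic (le0 y a)) as [Hya | nHya].
  - (* a tie: anchor [a] at the first step *)
    set (R1 := upgrade (lex1 le0 (minset le0 (D 0))) a).
    destruct (minset_doubleton_tie le0 a y Hay Hya) as [ma my].
    destruct (lex_run_invariant (fun R => strictly_below R a y) R1 D
                (upgrade_strictly_below _ a y (not_eq_sym nay)) Hstep) as [[_ Hrun] Hinv].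
    exists (fun k => match k with 0 => le0 | S k => lex_run R1 D k end). split.
    + apply ab_run_cons; [exact (ab_step_upgrade le0 _ a y ma my nay) | exact Hrun].
    + exact Hinv.
  - destruct (lex_run_invariant (fun R => strictly_below R a y) le0 D (conj Hay nHya) Hstep)
      as [Hrun Hinv].
    exists (lex_run le0 D). split; [exact Hrun | intro k; apply Hinv].
Qed.

Lemma lex1_doubleton_keeps_below R a x z :
  a <> x -> z <> x -> strictly_below R x a -> strictly_below R z a ->
  let R' := lex1 R (minset R (doubleton a x)) in
  is_singleton_of (minset R (doubleton a x)) x
  /\ strictly_below R' x a /\ strictly_below R' z a.
Proof.
  intros nax nzx Hx Hz R'. pose proof (minset_doubleton_r R a x Hx) as Hq.
  assert (nqa : ~ minset R (doubleton a x) a) by (intro qa; now apply nax, Hq).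
  split; [exact Hq | split].
  - apply lex1_strictly_below_in_out; [now apply Hq | exact nqa].
  - apply lex1_strictly_below_out; [intro qz; now apply nzx, Hq | exact nqa | exact Hz].
Qed.

Lemma lexab_alternating_run_stuck (le0 : prel W) a b c D :
  a <> b -> a <> c -> b <> c ->
  strictly_below le0 b a -> strictly_below le0 c a ->
  (forall k, D k = doubleton a b \/ D k = doubleton a c) ->
  ab_run le0 D (lex_run le0 D) /\ forall k, strictly_below (lex_run le0 D k) b a.
Proof.
  intros nab nac nbc Hb Hc HD.
  destruct (lex_run_invariant (fun R => strictly_below R b a /\ strictly_below R c a) le0 D
              (conj Hb Hc)) as [Hrun Hinv].
  - intros R k [HRb HRc]. destruct (HD k) as [-> | ->].
    + destruct (lex1_doubleton_keeps_below R a b c nab (not_eq_sym nbc) HRb HRc)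
        as [Hq [Hb' Hc']].
      exists b. auto.
    + destruct (lex1_doubleton_keeps_below R a c b nac nbc HRc HRb) as [Hq [Hc' Hb']].
      exists c. auto.
  - split; [exact Hrun | intro k; apply Hinv].
Qed.

Definition converges_on (le0 : prel W) D (s : W) : Prop :=
  forall P, ab_run le0 D P ->
    exists N, forall n, N <= n -> is_singleton_of (minset (P n) setT) s.

Lemma not_converges_of_run (le0 : prel W) D x s (P : nat -> prel W) :
  ab_run le0 D P -> (forall k, strictly_below (P (S k)) x s) -> ~ converges_on le0 D s.
Proof.
  intros HP Hb Hconv. destruct (Hconv P HP) as [N HN].
  apply (strictly_below_not_minimal _ x s (Hb N)).
  apply (HN (S N)); [lia | reflexivity].
Qed.

Lemma in_prefix_sound D s n X : sound_for D s -> In X (prefix D n) -> X s.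
Proof.
  intros Hso Hin. apply in_map_iff in Hin as [k [<- _]]. apply Hso.
Qed.

Lemma in_prefix_late D n k : k < n -> In (D k) (prefix D n).
Proof. intros Hk. apply in_map. apply in_seq. lia. Qed.

End LexAB.

Arguments doubleton {W}.
Arguments strictly_below {W}.
Arguments lex_run {W}.
Arguments converges_on {W}.

Inductive W3 : Type := wa | wb | wc.

Definition Oab : pset W3 := doubleton wa wb.
Definition Oac : pset W3 := doubleton wa wc.
Definition Obs3 (O : pset W3) : Prop := O = Oab \/ O = Oac.

Definition guess3 (l : list (pset W3)) (w : W3) : Prop :=
  (In Oab l /\ In Oac l /\ w = wa) \/ (In Oab l /\ ~ In Oac l /\ w = wb)
  \/ (~ In Oab l /\ w = wc).

Lemma at_most_countable_W3 : at_most_countable W3.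
Proof.
  exists (fun w => match w with wa => 0 | wb => 1 | wc => 2 end).
  intros [| |] [| |]; discriminate || reflexivity.
Qed.

Lemma identifiable_Obs3 : identifiable W3 Obs3.
Proof.
  exists guess3. intros s D _ Hso Hco.
  assert (Hnever : forall X n, ~ X s -> ~ In X (prefix D n))
    by (intros X n nX Hin; exact (nX (in_prefix_sound _ _ _ _ _ Hso Hin))).
  unfold guess3. destruct s.
  - destruct (Hco Oab (or_introl eq_refl) (or_introl eq_refl)) as [n1 <-].
    destruct (Hco Oac (or_intror eq_refl) (or_introl eq_refl)) as [n2 <-].
    exists (S (n1 + n2)). intros n Hn w.
    pose proof (in_prefix_late _ D n n1 ltac:(lia)).
    pose proof (in_prefix_late _ D n n2 ltac:(lia)). tauto.
  - destruct (Hco Oab (or_introl eq_refl) (or_intror eq_refl)) as [n1 <-].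
    exists (S n1). intros n Hn w.
    pose proof (in_prefix_late _ D n n1 ltac:(lia)).
    assert (~ In Oac (prefix D n)) by (apply Hnever; now intros [e | e]). tauto.
  - exists 0. intros n _ w.
    assert (~ In Oab (prefix D n)) by (apply Hnever; now intros [e | e]). tauto.
Qed.

Lemma Obs3_const_complete y :
  y = wb \/ y = wc -> complete_for Obs3 (fun _ => doubleton wa y) y.
Proof.
  intros Hy O [-> | ->] Oy; exists 0; destruct Hy as [-> | ->];
    solve [reflexivity | now destruct Oy].
Qed.

Lemma not_identifiable_LexAB_Obs3 : ~ identifiable_LexAB W3 Obs3.
Proof.
  intros [le0 [[le_total _] Hid]].
  assert (Hbelow : forall y, y = wb \/ y = wc -> strictly_below le0 y wa).
  { intros y Hy. assert (nay : wa <> y) by (now destruct Hy as [-> | ->]).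
    assert (nHay : ~ le0 wa y).
    { intro Hay. destruct (lexab_doubleton_run_stuck _ le0 wa y nay Hay) as [P [HP Hstuck]].
      apply (not_converges_of_run _ le0 _ wa y P HP Hstuck).
      refine (proj2 (Hid y _ _ _ _)); [| intro; now right | now apply Obs3_const_complete].
      intro. destruct Hy as [-> | ->]; [now left | now right]. }
    split; [destruct (le_total y wa) |]; tauto. }
  set (D := fun n => if Nat.even n then Oab else Oac).
  destruct (lexab_alternating_run_stuck _ le0 wa wb wc D) as [HP Hstuck];
    try discriminate; try (apply Hbelow; tauto).
  { intro k. unfold D. destruct (Nat.even k); tauto. }
  apply (not_converges_of_run _ le0 D wb wa _ HP (fun k => Hstuck (S k))).
  refine (proj2 (Hid wa D _ _ _)).
  - intro k. unfold D. destruct (Nat.even k); [now left | now right].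
  - intro k. unfold D. destruct (Nat.even k); now left.
  - intros O [-> | ->] _; [exists 0 | exists 1]; reflexivity.
Qed.

Theorem mainTheorem7 :
  exists (W : Type) (Obs : (W -> Prop) -> Prop),
    inhabited W /\ at_most_countable W /\
    identifiable W Obs /\ ~ identifiable_LexAB W Obs.
Proof.
  exists W3, Obs3.
  exact (conj (inhabits wa)
           (conj at_most_countable_W3 (conj identifiable_Obs3 not_identifiable_LexAB_Obs3))).
Qed.
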